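(* Let $L$ be a finite simplicial complex and $H\subseteq L$ a hypergraph, with $\mathrm{Ext}=\Delta\gamma\delta\gamma$ and $\mathrm{Int}=\delta\gamma\Delta\gamma$. Let $r$ be the smallest non-negative integer with $\mathrm{Ext}^r(\gamma H)=L$ and $t$ the smallest non-negative integer with $\mathrm{Int}^t(H)=\emptyset$ (assuming both exist). Then $t\in\{r-1,r,r+1\}$.
   Context: $L$ is a finite collection of nonempty sets closed under nonempty subsets; hypergraphs in $L$ are subsets of $L$. $\Delta H=\{\sigma\in L:\exists\tau\in H,\sigma\subseteq\tau\}$, $\delta H=\{\sigma\in L:\text{every nonempty }\tau\subseteq\sigma\text{ lies in }H\}$, $\gamma H=L\setminus H$; $T^0$ is the identity. *)

From mathcomp Require Import all_boot.
Set Implicit Arguments. Unset Strict Implicit. Unset Printing Implicit Defensive.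

(* A finite simplicial complex L on a finite vertex type T: a finite collection
   of nonempty sets closed under nonempty subsets. Hypergraphs in L are subsets of L. *)
Definition simplicial_complex (T : finType) (L : {set {set T}}) : Prop :=
  set0 \notin L /\
  (forall s t : {set T}, s \in L -> t != set0 -> t \subset s -> t \in L).

Section Ops.
Variables (T : finType) (L : {set {set T}}).

Definition Delta (H : {set {set T}}) : {set {set T}} :=
  [set s in L | [exists t in H, s \subset t]].

Definition delta (H : {set {set T}}) : {set {set T}} :=
  [set s in L | [forall t : {set T}, ((t != set0) && (t \subset s)) ==> (t \in H)]].

Definition gamma (H : {set {set T}}) : {set {set T}} := L :\: H.

Definition Ext (H : {set {set T}}) : {set {set T}} := Delta (gamma (delta (gamma H))).
Definition Int (H : {set {set T}}) : {set {set T}} := delta (gamma (Delta (gamma H))).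
End Ops.

(* With coDelta := gamma Delta gamma we have Int = delta coDelta and, gamma
   being an involution on subsets of L, Ext^k (gamma H) = gamma ((coDelta delta)^k H);
   so r and t are the first times at which the iterates of coDelta delta, resp.
   delta coDelta, empty H.  Both maps are monotone and shrink their argument, so
   (delta coDelta)^(k+1) H = delta ((coDelta delta)^k (coDelta H)) is contained in
   (coDelta delta)^k H, and symmetrically: each iteration empties H at most one
   step after the other. *)

From mathcomp Require Import all_boot zify.

Set Implicit Arguments. Unset Strict Implicit. Unset Printing Implicit Defensive.

Lemma iter_comp_swap (A : Type) (f g : A -> A) k x :
  iter k.+1 (f \o g) x = f (iter k (g \o f) (g x)).
Proof. by elim: k => //= k ->. Qed.

Lemma iter_homo (U : finType) (h : {set U} -> {set U}) k :
  {homo h : X Y / X \subset Y} -> {homo iter k h : X Y / X \subset Y}.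
Proof. by move=> hS X Y XY; elim: k => //= k; apply: hS. Qed.

Section ShrinkingMaps.
Variables (U : finType) (f g : {set U} -> {set U}).
Hypotheses (fS : {homo f : X Y / X \subset Y}) (gS : {homo g : X Y / X \subset Y}).
Hypotheses (f_sub : forall X, f X \subset X) (g_sub : forall X, g X \subset X).

Lemma iter_comp_shift k X : iter k.+1 (f \o g) X \subset iter k (g \o f) X.
Proof.
rewrite iter_comp_swap; apply: subset_trans (f_sub _) _.
by apply: iter_homo => [Y Z YZ|]; [apply/gS/fS | apply: g_sub].
Qed.

Lemma vanishing_index_shift r t X :
  iter r (g \o f) X = set0 -> (forall k, k < t -> iter k (f \o g) X <> set0) ->
  t <= r.+1.
Proof.
move=> gfr_0 fg_min; rewrite leqNgt; apply/negP => /fg_min; apply.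
by apply/eqP; rewrite -subset0 -gfr_0 iter_comp_shift.
Qed.

End ShrinkingMaps.

Section Complex.
Variables (T : finType) (L : {set {set T}}).
Implicit Types X Y : {set {set T}}.

Definition coDelta X := gamma L (Delta L (gamma L X)).

Lemma DeltaS : {homo Delta L : X Y / X \subset Y}.
Proof.
move=> X Y XY; apply/subsetP => s; rewrite !inE => /andP[-> /existsP[u /andP[uX su]]].
by apply/existsP; exists u; rewrite (subsetP XY).
Qed.

Lemma deltaS : {homo delta L : X Y / X \subset Y}.
Proof.
move=> X Y XY; apply/subsetP => s; rewrite !inE => /andP[-> /forallP sX] /=.
by apply/forallP => u; apply/implyP => /(implyP (sX u)); apply: (subsetP XY).
Qed.

Lemma gammaS X Y : X \subset Y -> gamma L Y \subset gamma L X.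
Proof. exact: setDS. Qed.

Lemma coDeltaS : {homo coDelta : X Y / X \subset Y}.
Proof. by move=> X Y XY; rewrite gammaS // DeltaS // gammaS. Qed.

Lemma delta_sub : set0 \notin L -> forall X, delta L X \subset X.
Proof.
move=> L0 X; apply/subsetP => s; rewrite inE => /andP[sL /forallP sX].
apply: (implyP (sX s)); rewrite subxx andbT.
by apply: contraNneq L0 => <-.
Qed.

Lemma coDelta_sub X : coDelta X \subset X.
Proof.
apply/subsetP => s; rewrite !inE => /andP[sDc sL]; apply: contraNT sDc => sX.
by rewrite sL; apply/existsP; exists s; rewrite !inE sX sL subxx.
Qed.

Lemma Delta_subL X : Delta L X \subset L.
Proof. by apply/subsetP => s; rewrite inE => /andP[]. Qed.

Lemma gammaK X : X \subset L -> gamma L (gamma L X) = X.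
Proof. by move=> XL; rewrite /gamma setDDr setDv set0U; apply/setIidPr. Qed.

Lemma gamma_eqL X : X \subset L -> (gamma L X == L) = (X == set0).
Proof.
move=> XL; apply/eqP/eqP => [XcL|->]; last exact: setD0.
by rewrite -(gammaK XL) XcL /gamma setDv.
Qed.

Lemma Ext_gamma X : X \subset L -> Ext L (gamma L X) = gamma L (coDelta (delta L X)).
Proof. by move=> XL; rewrite /Ext /coDelta !gammaK // Delta_subL. Qed.

Lemma iter_coDelta_delta_subL k X :
  X \subset L -> iter k (coDelta \o delta L) X \subset L.
Proof. by case: k => //= k _; apply: subsetDl. Qed.

Lemma iter_Ext_gamma k X : X \subset L ->
  iter k (Ext L) (gamma L X) = gamma L (iter k (coDelta \o delta L) X).
Proof.
by move=> XL; elim: k => //= k ->; rewrite Ext_gamma // iter_coDelta_delta_subL.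
Qed.

End Complex.

Theorem corollary3p5 (T : finType) (L H : {set {set T}}) (r t : nat) :
  simplicial_complex L ->
  H \subset L ->
  iter r (Ext L) (gamma L H) = L ->
  (forall k, k < r -> iter k (Ext L) (gamma L H) <> L) ->
  iter t (Int L) H = set0 ->
  (forall k, k < t -> iter k (Int L) H <> set0) ->
  t = r.-1 \/ t = r \/ t = r.+1.
Proof.
move=> [L0 _] HL Er Emin It Imin.
have Ddelta_r : iter r (coDelta L \o delta L) H = set0.
  by apply/eqP; rewrite -(gamma_eqL (iter_coDelta_delta_subL r HL)) -iter_Ext_gamma // Er.
have Ddelta_min k : k < r -> iter k (coDelta L \o delta L) H <> set0.
  by move=> kr Ddk; apply: (Emin k kr); rewrite iter_Ext_gamma // Ddk /gamma setD0.
have tr : t <= r.+1.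
  exact: (vanishing_index_shift (@deltaS _ L) (@coDeltaS _ L)
            (delta_sub L0) (@coDelta_sub _ L) Ddelta_r Imin).
have rt : r <= t.+1.
  exact: (vanishing_index_shift (@coDeltaS _ L) (@deltaS _ L)
            (@coDelta_sub _ L) (delta_sub L0) It Ddelta_min).
lia.
Qed.
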